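(* Let $M\ge1$, $\beta,\hat\beta>0$, and suppose $$\beta^{-1}>1+(M-1)\,m_0(\hat\beta)^2 .$$ Then the only solution $\mathbf{p}\in\mathbb{R}^M$ of $$\mathbf{p}=\big\langle \mathbf{s}\tanh(\beta\,\mathbf{s}\cdot\mathbf{p})\big\rangle_{\mathbf{s},\hat\beta}$$ is $\mathbf{p}=\mathbf{0}$, and consequently $m:=\langle\tanh(\beta\,\mathbf{s}\cdot\mathbf{p})\rangle_{\mathbf{s},\hat\beta}=0$.
   Context: $m_0(\hat\beta)$ is the largest nonnegative solution of $m=\tanh(\hat\beta m)$. $\langle\cdot\rangle_{\mathbf{s},\hat\beta}$ denotes expectation over $\mathbf{s}\in\{-1,1\}^M$ with i.i.d. entries of mean $m_0(\hat\beta)$, i.e. with weight $e^{\hat\beta m_0(\hat\beta)\sum_\mu s_\mu}/(2\cosh(\hat\beta m_0(\hat\beta)))^M$. This is the stationarity equation of $g(\mathbf{p};\hat\beta,\beta)=\log2-\beta|\mathbf{p}|^2/2+\langle\log\cosh(\beta\mathbf{s}\cdot\mathbf{p})\rangle_{\mathbf{s},\hat\beta}$. *)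

From HB Require Import structures.
From mathcomp Require Import all_boot all_order all_algebra.
From mathcomp Require Import all_classical all_reals all_analysis.
Set Implicit Arguments. Unset Strict Implicit. Unset Printing Implicit Defensive.
Import Order.TTheory GRing.Theory Num.Theory.
Local Open Scope ring_scope.
Local Open Scope classical_set_scope.

Definition coshR {R : realType} (x : R) : R := (expR x + expR (- x)) / 2.
Definition sinhR {R : realType} (x : R) : R := (expR x - expR (- x)) / 2.
Definition tanhR {R : realType} (x : R) : R := sinhR x / coshR x.

(* m_0(bh): largest nonnegative solution of m = tanh(bh m),
   taken as the supremum of the (nonempty, bounded, closed) solution set *)
Definition m0 {R : realType} (bh : R) : R :=
  sup [set m : R | 0 <= m /\ m = tanhR (bh * m)].

Definition spin {R : realType} (b : bool) : R := if b then 1 else -1.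

Definition dotsp {R : realType} {M : nat} (s : {ffun 'I_M -> bool}) (p : 'I_M -> R) : R :=
  \sum_(i < M) spin (s i) * p i.

Definition savg {R : realType} (M : nat) (bh : R) (f : {ffun 'I_M -> bool} -> R) : R :=
  \sum_(s : {ffun 'I_M -> bool})
     expR (bh * m0 bh * \sum_(i < M) spin (R:=R) (s i)) / (2 * coshR (bh * m0 bh)) ^+ M * f s.

From HB Require Import structures.
From mathcomp Require Import all_boot all_order all_algebra.
From mathcomp Require Import all_classical all_reals all_analysis.
From mathcomp Require Import ring lra.
Import Order.TTheory GRing.Theory Num.Theory.
Import numFieldNormedType.Exports.
Local Open Scope classical_set_scope.
Local Open Scope ring_scope.

(* Let p solve p = <s tanh(beta s.p)>, write S = |p|^2, P = sum_mu p_mu and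
   t = tanh(bh m0).  Contracting the fixed-point equation with p gives the
   energy identity  S = <(s.p) tanh(beta s.p)>,  and x tanh x <= x^2 bounds it
   by beta <(s.p)^2>.  The spins are i.i.d. with mean t, so
   <(s.p)^2> = t^2 P^2 + (1 - t^2) S <= (1 + (M-1) t^2) S  by Cauchy-Schwarz,
   and t <= m0 because tanh(bh m) - m changes sign above m0.  Hence
   S <= beta (1 + (M-1) m0^2) S with beta (1 + (M-1) m0^2) < 1, so S = 0. *)

Lemma coshR_gt0 {R : realType} (x : R) : 0 < coshR x.
Proof. by rewrite /coshR divr_gt0 // addr_gt0 // expR_gt0. Qed.

Lemma sinhR_ge0 {R : realType} (x : R) : 0 <= x -> 0 <= sinhR x.
Proof. by move=> x0; rewrite /sinhR divr_ge0 // subr_ge0 ler_expR; lra. Qed.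

Lemma tanhR0 {R : realType} : tanhR (0 : R) = 0.
Proof. by rewrite /tanhR /sinhR oppr0 subrr !mul0r. Qed.

Lemma tanhRN {R : realType} (x : R) : tanhR (- x) = - tanhR x.
Proof. by rewrite /tanhR /sinhR /coshR opprK (addrC (expR (- x)) (expR x)); ring. Qed.

Lemma tanhR_ge0 {R : realType} (x : R) : 0 <= x -> 0 <= tanhR x.
Proof. by move=> x0; rewrite /tanhR divr_ge0 ?sinhR_ge0 // ltW // coshR_gt0. Qed.

Lemma tanhR_lt1 {R : realType} (x : R) : tanhR x < 1.
Proof.
rewrite /tanhR ltr_pdivrMr ?coshR_gt0 // mul1r /sinhR /coshR.
by have := expR_gt0 (- x); lra.
Qed.

Lemma is_derive_expRN {R : realType} (x : R) :
  is_derive x 1 (fun y : R => expR (- y)) (- expR (- x)).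
Proof.
by have := is_derive1_comp (f:=expR) (is_derive_expR _) (is_deriveNid x 1); rewrite mulrN1.
Qed.

Lemma is_derive_sinhR {R : realType} (x : R) : is_derive x 1 (@sinhR R) (coshR x).
Proof.
have := is_derive_expRN x => dN.
by apply: is_derive_eq; rewrite /GRing.scale /= /coshR; ring.
Qed.

Lemma is_derive_coshR {R : realType} (x : R) : is_derive x 1 (@coshR R) (sinhR x).
Proof.
have := is_derive_expRN x => dN.
by apply: is_derive_eq; rewrite /GRing.scale /= /sinhR; ring.
Qed.

Lemma continuous_tanhR {R : realType} : continuous (@tanhR R).
Proof.
have cont_of (f df : R -> R) : (forall x : R, is_derive x 1 f (df x)) -> continuous f.
  by move=> fd x; apply/differentiable_continuous/derivable1_diffP; exact: ex_derive.
move=> x; apply: continuousM; first exact: cont_of is_derive_sinhR x.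
by apply: continuousV; [rewrite gt_eqF ?coshR_gt0 | exact: cont_of is_derive_coshR x].
Qed.

(* tanh x <= x on [0, +oo): x cosh x - sinh x vanishes at 0 and has the
   nonnegative derivative x sinh x there. *)
Lemma tanhR_le_id {R : realType} (x : R) : 0 <= x -> tanhR x <= x.
Proof.
move=> x0; pose psi (y : R) := y * coshR y - sinhR y.
have psi_d (y : R) : is_derive y 1 psi (y * sinhR y).
  have := is_derive_sinhR y; have := is_derive_coshR y => dc ds.
  by apply: is_derive_eq; rewrite /GRing.scale /=; ring.
have psi_mono : psi 0 <= psi x.
  apply: (@ger0_derive1_ndecry _ psi 0) => //.
  - move=> y; rewrite in_itv /= andbT => y0; have := psi_d y => ?.
    by rewrite derive1E derive_val mulr_ge0 ?sinhR_ge0 ?ltW.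
  - apply: continuous_subspaceT => y; have := psi_d y => ?.
    by apply/differentiable_continuous/derivable1_diffP; exact: ex_derive.
have psi0 : psi 0 = 0 by rewrite /psi /sinhR oppr0 subrr !mul0r subrr.
move: psi_mono; rewrite psi0 /psi /tanhR ler_pdivrMr ?coshR_gt0 //; lra.
Qed.

Lemma mul_tanhR_le {R : realType} (y : R) : y * tanhR y <= y ^+ 2.
Proof.
wlog y0 : y / 0 <= y.
  move=> hpos; have [/hpos //|/ltW y0] := lerP 0 y.
  by have := hpos (- y); rewrite tanhRN mulrNN sqrrN; apply; lra.
by rewrite expr2 ler_wpM2l // tanhR_le_id.
Qed.

(* The largest solution m0 of m = tanh(bh m) satisfies tanh(bh m0) <= m0:
   otherwise tanh(bh m) - m would vanish strictly above m0 before m = 1. *)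
Lemma m0_ge0_tanhR_le {R : realType} (bh : R) :
  0 <= m0 bh /\ tanhR (bh * m0 bh) <= m0 bh.
Proof.
set S := [set m : R | 0 <= m /\ m = tanhR (bh * m)].
have S0 : S 0 by split; rewrite ?mulr0 ?tanhR0.
have S_ub : has_ubound S by exists 1 => m [_ ->]; exact/ltW/tanhR_lt1.
have le_m0 m : S m -> m <= m0 bh by move=> Sm; exact: ub_le_sup.
have m0_ge0 := le_m0 0 S0; split => //.
rewrite leNgt; apply/negP => hlt.
pose g (m : R) := tanhR (bh * m) - m.
have g_cont (x : R) : {for x, continuous g}.
  apply: continuousB; last exact: cvg_id.
  apply: (continuous_comp (f := fun m => bh * m)); last exact: continuous_tanhR.
  by apply: continuousM; [exact: cst_continuous | exact: cvg_id].
have m0_le1 : m0 bh <= 1 by have := tanhR_lt1 (bh * m0 bh); lra.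
have [c] : exists2 c, c \in `[m0 bh, 1] & g c = 0.
  apply: IVT; first exact: m0_le1.
    by apply: continuous_subspaceT; exact: g_cont.
  have := tanhR_lt1 bh; rewrite /g mulr1 => ?.
  by rewrite ge_min le_max; apply/andP; split; apply/orP; [right|left]; lra.
rewrite in_itv /= => /andP[c1 _] /eqP; rewrite subr_eq0 => /eqP gc.
have c_le := le_m0 c (conj (le_trans m0_ge0 c1) (esym gc)).
have c_eq : c = m0 bh by apply/eqP; rewrite eq_le c_le c1.
by move: hlt; rewrite -c_eq gc ltxx.
Qed.

Lemma coupling_le {R : realType} {M : nat} {bh : R} : (1 <= M)%N -> 0 <= bh ->
  1 + (M%:R - 1) * tanhR (bh * m0 bh) ^+ 2 <= 1 + (M%:R - 1) * m0 bh ^+ 2.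
Proof.
move=> M_ge1 bh_ge0; have [m0_ge0 t_le] := m0_ge0_tanhR_le bh.
by rewrite lerD2l ler_wpM2l ?subr_ge0 ?ler1n // ler_sqr ?nnegrE ?tanhR_ge0 ?mulr_ge0.
Qed.

Section SpinAverage.
Variables (R : realType) (M : nat) (bh : R).
Local Notation avg := (@savg R M bh).
Local Notation t := (tanhR (bh * m0 bh)).

Lemma savg_ext f g : (forall s, f s = g s) -> avg f = avg g.
Proof. by move=> fg; apply: eq_bigr => s _; rewrite fg. Qed.

Lemma savgZ k f : avg (fun s => k * f s) = k * avg f.
Proof. by rewrite /savg mulr_sumr; apply: eq_bigr => s _; ring. Qed.

Lemma savg_sum n (f : 'I_n -> {ffun 'I_M -> bool} -> R) :
  avg (fun s => \sum_(i < n) f i s) = \sum_(i < n) avg (f i).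
Proof. by rewrite /savg exchange_big; apply: eq_bigr => s _; rewrite mulr_sumr. Qed.

Lemma savg_le f g : (forall s, f s <= g s) -> avg f <= avg g.
Proof.
move=> fg; apply: ler_sum => s _; apply: ler_wpM2l => //.
by rewrite divr_ge0 ?exprn_ge0 ?mulr_ge0 // ltW ?expR_gt0 ?coshR_gt0.
Qed.

(* Independence: the average of a product of distinct spins is t^|A|.  The
   weight factorizes over sites, each site contributing tanh(bh m0) or 1. *)
Lemma savg_prod (A : {set 'I_M}) :
  avg (fun s => \prod_(i in A) spin (s i)) = t ^+ #|A|.
Proof.
rewrite /savg; set a := bh * m0 bh; set c := 2 * coshR a.
have c0 : 0 < c by rewrite mulr_gt0 // coshR_gt0.
pose F (i : 'I_M) (b : bool) := expR (a * spin b) / c * (if i \in A then spin b else 1).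
transitivity (\sum_(s : {ffun 'I_M -> bool}) \prod_(i < M) F i (s i)).
  apply: eq_bigr => s _; rewrite /F big_split /= -big_mkcond /=; congr (_ * _).
  by rewrite big_split /= -expR_sum -mulr_sumr prodr_const card_ord exprVn.
have site i : \sum_(b : bool) F i b = if i \in A then t else 1.
  have ch : expR a + expR (- a) != 0 by rewrite gt_eqF // addr_gt0 ?expR_gt0.
  rewrite big_bool /F /= mulr1 mulrN1 /c /tanhR /sinhR /coshR.
  by case: (i \in A); rewrite ?mulr1; field.
rewrite -bigA_distr_bigA (eq_bigr _ (fun i _ => site i)) -big_mkcond /=.
exact: prodr_const.
Qed.

Lemma savg_spin2 (mu nu : 'I_M) :
  avg (fun s => spin (s mu) * spin (s nu)) = if nu == mu then 1 else t ^+ 2.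
Proof.
case: eqP => [->|/eqP nu_mu].
  transitivity (avg (fun s => \prod_(i in (finset.set0 : {set 'I_M})) spin (s i))).
    by apply: savg_ext => s; rewrite big_set0; case: (s mu); rewrite /spin ?mulrNN mulr1.
  by rewrite savg_prod cards0.
have := savg_prod [set mu; nu]; rewrite cards2 eq_sym nu_mu => <-; apply: savg_ext => s.
by rewrite big_setU1 ?big_set1 // inE eq_sym.
Qed.

Lemma savg_dotsp_sqr (p : 'I_M -> R) :
  avg (fun s => dotsp s p ^+ 2) =
  t ^+ 2 * (\sum_(mu < M) p mu) ^+ 2 + (1 - t ^+ 2) * \sum_(mu < M) p mu ^+ 2.
Proof.
transitivity (avg (fun s => \sum_(mu < M) \sum_(nu < M)
                                p mu * p nu * (spin (s mu) * spin (s nu)))).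
  apply: savg_ext => s; rewrite /dotsp expr2 mulr_suml; apply: eq_bigr => mu _.
  by rewrite mulr_sumr; apply: eq_bigr => nu _; ring.
rewrite savg_sum.
transitivity (\sum_(mu < M) (t ^+ 2 * p mu * \sum_(nu < M) p nu + (1 - t ^+ 2) * p mu ^+ 2)).
  apply: eq_bigr => mu _; rewrite savg_sum.
  have term nu : avg (fun s => p mu * p nu * (spin (s mu) * spin (s nu))) =
      t ^+ 2 * p mu * p nu + (if nu == mu then (1 - t ^+ 2) * p mu ^+ 2 else 0).
    by rewrite savgZ savg_spin2; case: eqP => [->|_]; ring.
  rewrite (eq_bigr _ (fun nu _ => term nu)).
  by rewrite big_split /= -big_mkcond big_pred1_eq mulr_sumr.
by rewrite big_split /= -mulr_suml -!mulr_sumr [in RHS]expr2 mulrA.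
Qed.

End SpinAverage.

Lemma sqr_sum_le {R : realType} {M : nat} (p : 'I_M -> R) :
  (\sum_(i < M) p i) ^+ 2 <= M%:R * \sum_(i < M) p i ^+ 2.
Proof.
set P := \sum_(i < M) p i; set S := \sum_(i < M) p i ^+ 2.
have expand i : \sum_(j < M) (p i - p j) ^+ 2 = M%:R * p i ^+ 2 + S - 2 * p i * P.
  rewrite (eq_bigr (fun j => p i ^+ 2 + p j ^+ 2 - 2 * p i * p j)) => [|j _]; last by ring.
  by rewrite sumrB big_split /= sumr_const card_ord /P mulr_sumr [M%:R * _]mulr_natl.
have : 0 <= \sum_(i < M) \sum_(j < M) (p i - p j) ^+ 2.
  by do 2!(apply: sumr_ge0 => ? _); exact: sqr_ge0.
rewrite (eq_bigr _ (fun i _ => expand i)) sumrB big_split /= sumr_const card_ord.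
rewrite -mulr_sumr -mulr_suml -mulr_sumr -/S -/P -mulr_natl mulr1 expr2; lra.
Qed.

Section FixedPoint.
Context {R : realType} {M : nat} {beta bh : R} {p : 'I_M -> R}.
Hypothesis beta_gt0 : 0 < beta.
Hypothesis fixed : forall mu : 'I_M,
  p mu = savg bh (fun s => spin (s mu) * tanhR (beta * dotsp s p)).
Local Notation avg := (@savg R M bh).
Local Notation S := (\sum_(mu < M) p mu ^+ 2).

(* Energy identity, obtained by contracting the fixed-point equation with p. *)
Lemma fixed_point_energy :
  S = avg (fun s => dotsp s p * tanhR (beta * dotsp s p)).
Proof.
transitivity (\sum_(mu < M) avg (fun s => p mu * (spin (s mu) * tanhR (beta * dotsp s p)))).
  by apply: eq_bigr => mu _; rewrite savgZ expr2 {2}(fixed mu).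
rewrite -savg_sum; apply: savg_ext => s.
by rewrite /dotsp mulr_suml; apply: eq_bigr => mu _; ring.
Qed.

Lemma fixed_point_sqnorm_le :
  S <= beta * (1 + (M%:R - 1) * tanhR (bh * m0 bh) ^+ 2) * S.
Proof.
set t := tanhR (bh * m0 bh).
have S_ge0 : 0 <= S by apply: sumr_ge0 => i _; exact: sqr_ge0.
(* Second moment bound via Cauchy-Schwarz: t^2 P^2 <= t^2 M S. *)
have avg_le : avg (fun s => dotsp s p ^+ 2) <= (1 + (M%:R - 1) * t ^+ 2) * S.
  rewrite savg_dotsp_sqr -/t.
  have := ler_wpM2l (sqr_ge0 t) (sqr_sum_le p); lra.
(* Energy identity, then the pointwise bound x tanh(beta x) <= beta x^2. *)
rewrite {1}fixed_point_energy -mulrA.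
apply: le_trans (ler_wpM2l (ltW beta_gt0) avg_le); rewrite -savgZ.
apply: savg_le => s; set d := dotsp s p.
rewrite -(ler_pM2l beta_gt0) mulrA (_ : beta * (beta * d ^+ 2) = (beta * d) ^+ 2); last by ring.
exact: mul_tanhR_le.
Qed.

Lemma fixed_point_eq0 (c : R) :
  1 + (M%:R - 1) * tanhR (bh * m0 bh) ^+ 2 <= c -> beta * c < 1 -> p = (fun _ => 0).
Proof.
move=> coupling contracting.
have S_ge0 : 0 <= S by apply: sumr_ge0 => i _; exact: sqr_ge0.
have S_le : S <= (beta * c) * S.
  apply: le_trans fixed_point_sqnorm_le _.
  by rewrite ler_wpM2r // ler_wpM2l // ltW.
have S0 : S = 0 by nra.
apply: funext => mu; apply/eqP; rewrite -sqrf_eq0; apply/eqP.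
exact: (psumr_eq0P (fun i _ => sqr_ge0 (p i)) S0).
Qed.

End FixedPoint.

Theorem proposition5 (R : realType) (M : nat) (beta bh : R) :
  (1 <= M)%N -> 0 < beta -> 0 < bh ->
  beta^-1 > 1 + (M%:R - 1) * (m0 bh) ^+ 2 ->
  (forall p : 'I_M -> R,
     (forall mu : 'I_M,
        p mu = @savg R M bh (fun s => spin (s mu) * tanhR (beta * dotsp s p)))
     <-> p = (fun _ => 0))
  /\
  (forall p : 'I_M -> R,
     (forall mu : 'I_M,
        p mu = @savg R M bh (fun s => spin (s mu) * tanhR (beta * dotsp s p))) ->
     @savg R M bh (fun s => tanhR (beta * dotsp s p)) = 0).
Proof.
move=> M_ge1 beta_gt0 bh_gt0 small_beta.
have contracting : beta * (1 + (M%:R - 1) * m0 bh ^+ 2) < 1.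
  by rewrite -ltr_pdivlMl // mulr1.
have only_zero (p : 'I_M -> R) :
    (forall mu, p mu = savg bh (fun s => spin (s mu) * tanhR (beta * dotsp s p))) ->
    p = (fun _ => 0).
  by move=> fixed; apply: (fixed_point_eq0 beta_gt0 fixed _ (coupling_le M_ge1 (ltW bh_gt0))).
have avg_at0 f : @savg R M bh (fun s => f s * tanhR (beta * dotsp s (fun _ => 0))) = 0.
  have dot0 s : dotsp s (fun _ : 'I_M => 0 : R) = 0 by rewrite /dotsp big1 // => i _; rewrite mulr0.
  by rewrite /savg big1 // => s _; rewrite dot0 mulr0 tanhR0 !mulr0.
split=> p; first by split=> [/only_zero //|-> mu]; rewrite avg_at0.
move/only_zero ->; rewrite -[RHS](avg_at0 (fun=> 1)).
by apply: savg_ext => s; rewrite mul1r.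
Qed.
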